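(* Let $(X,d,\mu)$ be a space of homogeneous type, let $\mathcal{D}$ be a dyadic grid on $X$, let $p(\cdot)\in\mathrm{LH}$ and let $w\in A_{p(\cdot)}$. Then there exists a constant $K$ such that for every $Q\in\mathcal{D}$, \[ \|w\chi_Q\|_{p(\cdot)}\|w^{-1}\chi_Q\|_{p'(\cdot)}\le K\mu(Q). \]
   Context: A space of homogeneous type $(X,d,\mu)$: $X$ nonempty, $d$ a quasi-metric ($d(x,y)=0$ iff $x=y$, symmetric, $d(x,y)\le A_0(d(x,z)+d(z,y))$ for some $A_0\ge1$), $\mu$ a regular measure on the $\sigma$-algebra generated by balls $B(x,r)=\{y:d(x,y)<r\}$ and open sets, with $0<\mu(B(x,2r))\le C_\mu\mu(B(x,r))<\infty$. A dyadic grid on $X$ is a family $\mathcal{D}=\bigcup_{k\in\mathbb{Z}}\mathcal{D}_k$ of subsets of $X$ (cubes), with points $\{x_c(Q)\}_{Q\in\mathcal D}$ and constants $C_d>0$, $d_0>1$, $0<\epsilon<1$, such that: (1) for each $k$ the cubes of $\mathcal D_k$ are pairwise disjoint and cover $X$; (2) any two cubes are either disjoint or one contains the other; (3) each $Q_1\in\mathcal D_k$ contains at least one $Q_2\in\mathcal D_{k-1}$ (a child) and is contained in exactly one $Q_3\in\mathcal D_{k+1}$ (its parent); (4) if $Q_2$ is a child of $Q_1$ then $\mu(Q_2)\ge\epsilon\mu(Q_1)$; (5) for $Q\in\mathcal D_k$, $B(x_c(Q),d_0^k)\subseteq Q\subseteq B(x_c(Q),C_dd_0^k)$. An exponent is a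 measurable $p:X\to[1,\infty]$. With $X_\infty=\{p=\infty\}$, $\rho_{p(\cdot)}(f)=\int_{X\setminus X_\infty}|f(x)|^{p(x)}d\mu+\|f\|_{L^\infty(X_\infty)}$ and $\|f\|_{p(\cdot)}=\inf\{\lambda>0:\rho_{p(\cdot)}(f/\lambda)\le1\}$; $p'(x)=p(x)/(p(x)-1)$ (with $1/0=\infty$, $1/\infty=0$). $p(\cdot)\in\mathrm{LH}_0$ if there is $C_0$ with $|p(x)-p(y)|<-C_0/\log d(x,y)$ whenever $d(x,y)<1/2$; $p(\cdot)\in\mathrm{LH}_\infty$ if there are constants $C_\infty,p_\infty$ with $|p(x)-p_\infty|<C_\infty/\log(e+d(x,x_0))$ for all $x$, for a fixed base point $x_0$; $\mathrm{LH}=\mathrm{LH}_0\cap\mathrm{LH}_\infty$. A weight is a locally integrable $w:X\to[0,\infty]$ with $0<w<\infty$ a.e.; $w\in A_{p(\cdot)}$ means there is $K_0$ with $\|w\chi_B\|_{p(\cdot)}\|w^{-1}\chi_B\|_{p'(\cdot)}\le K_0\mu(B)$ for every ball $B$. *)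

From HB Require Import structures.
From mathcomp Require Import all_boot all_order all_algebra.
From mathcomp Require Import all_classical all_reals all_analysis.
From mathcomp Require Import measurable_realfun ess_sup_inf.
From mathcomp Require Import ess_sup_inf.
Set Implicit Arguments. Unset Strict Implicit. Unset Printing Implicit Defensive.
Import Order.TTheory GRing.Theory Num.Theory.
Import numFieldNormedType.Exports.
Local Open Scope classical_set_scope.
Local Open Scope ring_scope.

Section Defs.
Context {disp : measure_display} {X : measurableType disp} {R : realType}.

Definition qball (dist : X -> X -> R) (x : X) (r : R) : set X :=
  [set y | dist x y < r].

Definition quasi_metric (dist : X -> X -> R) : Prop :=
  (forall x y, dist x y = 0 <-> x = y) /\
  (forall x y, dist x y = dist y x) /\
  exists A0 : R, 1 <= A0 /\
    forall x y z, dist x y <= A0 * (dist x z + dist z y).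

Definition qopen (dist : X -> X -> R) (U : set X) : Prop :=
  forall x, U x -> exists r : R, 0 < r /\ qball dist x r `<=` U.

Definition sigma_balls_open (dist : X -> X -> R) : Prop :=
  (@measurable disp X) =
  <<s [set A | (exists x r, A = qball dist x r) \/ qopen dist A] >>.

Definition regular_measure (dist : X -> X -> R)
    (mu : {measure set X -> \bar R}) : Prop :=
  forall A, measurable A ->
    mu A = ereal_inf [set mu U | U in [set U | qopen dist U /\ A `<=` U]].

Definition doubling (dist : X -> X -> R) (mu : {measure set X -> \bar R}) : Prop :=
  exists Cmu : R, forall x (r : R), 0 < r ->
    [/\ (0 < mu (qball dist x (2 * r)))%E,
        (mu (qball dist x (2 * r)) <= Cmu%:E * mu (qball dist x r))%E
      & (mu (qball dist x r) < +oo)%E].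

Definition homogeneous_type (dist : X -> X -> R)
    (mu : {measure set X -> \bar R}) : Prop :=
  [/\ quasi_metric dist, sigma_balls_open dist, regular_measure dist mu
    & doubling dist mu].

(* dyadic grid: D k is the family D_k of cubes of generation k *)
Definition dyadic_grid (dist : X -> X -> R) (mu : {measure set X -> \bar R})
    (D : int -> set (set X)) : Prop :=
  exists (xc : set X -> X) (Cd d0 eps : R),
  [/\ 0 < Cd, 1 < d0, 0 < eps & eps < 1]
  /\ (forall k Q, D k Q -> measurable Q)
  /\
    (forall k, (forall Q1 Q2, D k Q1 -> D k Q2 -> Q1 = Q2 \/ Q1 `&` Q2 = set0)
               /\ \bigcup_(Q in D k) Q = setT)
  /\
    (forall k l Q1 Q2, D k Q1 -> D l Q2 ->
        [\/ Q1 `&` Q2 = set0, Q1 `<=` Q2 | Q2 `<=` Q1])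
  /\
    (forall k Q1, D k Q1 ->
        (exists Q2, D (k - 1)%R Q2 /\ Q2 `<=` Q1) /\
        (exists Q3, [/\ D (k + 1)%R Q3, Q1 `<=` Q3 &
            forall Q', D (k + 1)%R Q' -> Q1 `<=` Q' -> Q' = Q3]))
  /\
    (forall k Q1 Q2, D k Q1 -> D (k - 1)%R Q2 -> Q2 `<=` Q1 ->
        (eps%:E * mu Q1 <= mu Q2)%E)
  /\
    (forall k Q, D k Q ->
        qball dist (xc Q) (d0 ^ k) `<=` Q /\
        Q `<=` qball dist (xc Q) (Cd * d0 ^ k)).

Definition in_dyadic_grid (D : int -> set (set X)) (Q : set X) : Prop :=
  exists k, D k Q.

Definition Xinf (p : X -> \bar R) : set X := [set x | p x = +oo%E].

Definition modular (mu : {measure set X -> \bar R}) (p : X -> \bar R)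
    (f : X -> R) : \bar R :=
  ((\int[mu]_(x in ~` Xinf p) (powR `|f x| (fine (p x)))%:E)
   + ess_sup mu (fun x => (`|f x| * \1_(Xinf p) x)%:E))%E.

Definition vnorm (mu : {measure set X -> \bar R}) (p : X -> \bar R)
    (f : X -> R) : \bar R :=
  ereal_inf [set lam%:E | lam in
    [set lam : R | 0 < lam /\ (modular mu p (fun x => (f x / lam)%R) <= 1)%E]].

Definition conj_exp (p : X -> \bar R) : X -> \bar R := fun x =>
  if p x == 1%E then +oo%E
  else if p x == +oo%E then 1%E
  else (fine (p x) / (fine (p x) - 1))%:E.

Definition exponent (p : X -> \bar R) : Prop :=
  measurable_fun setT p /\ forall x, (1 <= p x)%E.

Definition LH0 (dist : X -> X -> R) (p : X -> \bar R) : Prop :=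
  exists C0 : R, forall x y, 0 < dist x y -> dist x y < 2^-1 ->
    (`| p x - p y | < (- C0 / ln (dist x y))%:E)%E.

Definition LHinf (dist : X -> X -> R) (x0 : X) (p : X -> \bar R) : Prop :=
  exists Cinf pinf : R, forall x,
    (`| p x - pinf%:E | < (Cinf / ln (expR 1 + dist x x0))%:E)%E.

Definition LH (dist : X -> X -> R) (x0 : X) (p : X -> \bar R) : Prop :=
  LH0 dist p /\ LHinf dist x0 p.

Definition weight (dist : X -> X -> R) (mu : {measure set X -> \bar R})
    (w : X -> R) : Prop :=
  [/\ measurable_fun setT w,
      (forall x r, mu.-integrable (qball dist x r) (EFin \o w)),
      (forall x, 0 <= w x)
    & {ae mu, forall x, 0 < w x}].

Definition A_p (dist : X -> X -> R) (mu : {measure set X -> \bar R})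
    (p : X -> \bar R) (w : X -> R) : Prop :=
  weight dist mu w /\
  exists K0 : R, forall x r,
    (vnorm mu p (fun y => (w y * \1_(qball dist x r) y)%R)
     * vnorm mu (conj_exp p) (fun y => ((w y)^-1 * \1_(qball dist x r) y)%R)
     <= K0%:E * mu (qball dist x r))%E.

End Defs.

From HB Require Import structures.
From mathcomp Require Import all_boot all_order all_algebra.
From mathcomp Require Import all_classical all_reals all_analysis.
From mathcomp Require Import measurable_realfun ess_sup_inf.
Import Order.TTheory GRing.Theory Num.Theory.
Import numFieldNormedType.Exports.
Local Open Scope classical_set_scope.
Local Open Scope ring_scope.

(* A dyadic cube Q of generation k lies between two concentric balls,
   B(x_c, d0^k) c Q c B(x_c, Cd d0^k).  The Luxemburg norm is monotone in
   |f|, so the A_p(.) product over Q is bounded by the one over the larger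
   ball, hence by K0 mu(B(x_c, Cd d0^k)).  Iterating the doubling condition
   about log2 Cd times bounds this by a constant times mu(B(x_c, d0^k)),
   which is at most mu(Q). *)

Section LuxemburgNorm.
Context {disp : measure_display} {X : measurableType disp} {R : realType}.
Variable mu : {measure set X -> \bar R}.

Lemma modular_le (p : X -> \bar R) (f g : X -> R) :
  (forall x, (1 <= p x)%E) ->
  (forall x, `|f x| <= `|g x|) -> (modular mu p f <= modular mu p g)%E.
Proof.
move=> p1 fg; rewrite /modular; apply: leeD.
  rewrite !ge0_integralE; last 2 first.
  - by move=> x _; rewrite lee_fin powR_ge0.
  - by move=> x _; rewrite lee_fin powR_ge0.
  apply: ereal_sup_le => _ [h hf <-]; exists h => // x.
  apply: (le_trans (hf x)); rewrite /patch; case: ifP => // _.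
  rewrite lee_fin; apply: ge0_ler_powR; rewrite ?nnegrE //.
  exact/fine_ge0/(le_trans _ (p1 x)).
apply: le_ess_sup; apply: aeW => x /=; rewrite lee_fin.
by apply: ler_wpM2r => //; rewrite indicE; case: (_ \in _).
Qed.

Lemma vnorm_ge0 (p : X -> \bar R) (f : X -> R) : (0 <= vnorm mu p f)%E.
Proof. by apply: le_ereal_inf_tmp => _ [l [l0 _] <-]; rewrite lee_fin ltW. Qed.

Lemma vnorm_le (p : X -> \bar R) (f g : X -> R) :
  (forall x, (1 <= p x)%E) ->
  (forall x, `|f x| <= `|g x|) -> (vnorm mu p f <= vnorm mu p g)%E.
Proof.
move=> p1 fg; apply: ereal_inf_le_tmp => _ [l [l0 hl] <-]; exists l => //.
split => //; apply: le_trans hl; apply: modular_le => // x.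
by rewrite !normrM ler_wpM2r.
Qed.

Lemma vnorm_indic_subset (p : X -> \bar R) (f : X -> R) (A B : set X) :
  (forall x, (1 <= p x)%E) -> A `<=` B ->
  (vnorm mu p (fun y => (f y * \1_A y)%R)
   <= vnorm mu p (fun y => (f y * \1_B y)%R))%E.
Proof.
move=> p1 AB; apply: vnorm_le => // y; rewrite !normrM ler_wpM2l //.
rewrite !indicE; have [/set_mem Ay|_] := boolP (y \in A); last by rewrite normr0.
by rewrite (mem_set (AB _ Ay)).
Qed.

End LuxemburgNorm.

Lemma conj_exp_ge1 {disp : measure_display} {X : measurableType disp}
    {R : realType} (p : X -> \bar R) :
  (forall x, (1 <= p x)%E) -> forall x, (1 <= conj_exp p x)%E.
Proof.
move=> p1 x; rewrite /conj_exp; case: ifP => [_|/negbT ne1]; first by rewrite leey.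
case: ifP => [//|/negbT neoo].
move: (p1 x) ne1 neoo; case: (p x) => [a| |] //=.
rewrite lee_fin le_eqVlt => /predU1P[<-|a1]; first by rewrite eqxx.
move=> _ _; rewrite lee_fin ler_pdivlMr ?subr_gt0 // mul1r.
by rewrite lerBlDr lerDl.
Qed.

Section Doubling.
Context {disp : measure_display} {X : measurableType disp} {R : realType}.
Context {dist : X -> X -> R} {mu : {measure set X -> \bar R}}.

Lemma qball_measurable x r : sigma_balls_open dist -> measurable (qball dist x r).
Proof. by move=> ->; apply: sub_sigma_algebra; left; exists x, r. Qed.

Lemma le_qball x r s : r <= s -> qball dist x r `<=` qball dist x s.
Proof. by move=> rs y /lt_le_trans; apply. Qed.

Lemma doubling_iter (Cmu : R) :
  (forall x r, 0 < r ->
     (mu (qball dist x (2 * r)) <= Cmu%:E * mu (qball dist x r))%E) ->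
  forall n x r, 0 < r ->
  (mu (qball dist x (2 ^+ n * r))
     <= ((Num.max Cmu 1) ^+ n)%:E * mu (qball dist x r))%E.
Proof.
move=> dbl; elim=> [|n IH] x r r0; first by rewrite !expr0 mul1r mul1e.
have r1 : 0 < 2 ^+ n * r by rewrite mulr_gt0 // exprn_gt0.
rewrite exprS -mulrA; apply: (le_trans (dbl x _ r1)).
rewrite exprS EFinM -muleA.
apply: (le_trans (lee_wpmul2r (measure_ge0 _ _) (_ : Cmu%:E <= (Num.max Cmu 1)%:E)%E)).
  by rewrite lee_fin le_max lexx.
by apply: lee_wpmul2l; [rewrite lee_fin le_max ler01 orbT | exact: IH].
Qed.

Lemma doubling_dilate {c : R} :
  sigma_balls_open dist -> doubling dist mu -> 0 <= c ->
  exists2 C : R, 0 <= C & forall x r, 0 < r ->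
    (mu (qball dist x (c * r)) <= C%:E * mu (qball dist x r))%E.
Proof.
move=> sig [Cmu dbl] c0.
pose N := Num.Def.archi_bound c.
have cN : c <= 2 ^+ N.
  apply/ltW/(lt_trans (archi_boundP c0)).
  by rewrite -natrX ltr_nat ltn_expl.
exists (Num.max Cmu 1 ^+ N); first by rewrite exprn_ge0 // le_max ler01 orbT.
have dbl2 : forall y s, 0 < s ->
    (mu (qball dist y (2 * s)) <= Cmu%:E * mu (qball dist y s))%E.
  by move=> y s s0; have [] := dbl y s s0.
move=> x r r0; apply: (le_trans _ (doubling_iter _ dbl2 N x r r0)).
apply: le_measure; rewrite ?inE.
- exact: qball_measurable.
- exact: qball_measurable.
- by apply: le_qball; rewrite ler_wpM2r // ltW.
Qed.

End Doubling.

Lemma A_p_subset_qball {disp : measure_display} {X : measurableType disp}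
    {R : realType} {dist : X -> X -> R} {mu : {measure set X -> \bar R}}
    {p : X -> \bar R} {w : X -> R} :
  (forall x, (1 <= p x)%E) -> A_p dist mu p w ->
  exists2 K : R, 0 <= K & forall Q x r, Q `<=` qball dist x r ->
    (vnorm mu p (fun y => (w y * \1_Q y)%R)
     * vnorm mu (conj_exp p) (fun y => ((w y)^-1 * \1_Q y)%R)
     <= K%:E * mu (qball dist x r))%E.
Proof.
move=> p1 [_ [K0 hK0]]; exists (Num.max K0 0); first by rewrite le_max lexx orbT.
move=> Q x r QB.
apply: (@le_trans _ _ (K0%:E * mu (qball dist x r))%E); last first.
  by apply: lee_wpmul2r; [exact: measure_ge0 | rewrite lee_fin le_max lexx].
apply: le_trans (hK0 x r).
apply: lee_pmul; rewrite ?vnorm_ge0 //; apply: vnorm_indic_subset QB => //.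
exact: conj_exp_ge1.
Qed.

Theorem lemma4p2 (disp : measure_display) (X : measurableType disp)
  (R : realType) (dist : X -> X -> R) (mu : {measure set X -> \bar R})
  (x0 : X) (D : int -> set (set X)) (p : X -> \bar R) (w : X -> R) :
  homogeneous_type dist mu ->
  dyadic_grid dist mu D ->
  exponent p -> LH dist x0 p ->
  A_p dist mu p w ->
  exists K : R, forall Q, in_dyadic_grid D Q ->
    (vnorm mu p (fun y => (w y * \1_Q y)%R)
     * vnorm mu (conj_exp p) (fun y => ((w y)^-1 * \1_Q y)%R)
     <= K%:E * mu Q)%E.
Proof.
move=> [_ sig _ dbl] [xc [Cd [d0 [eps [[Cd0 d01 _ _] [mQ [_ [_ [_ [_ balls]]]]]]]]]].
move=> [_ p1] _ Apw.
have [K K0 hK] := A_p_subset_qball p1 Apw.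
have [C C0 hC] := doubling_dilate sig dbl (ltW Cd0).
exists (K * C) => Q [k DkQ].
have [inQ Qin] := balls k Q DkQ.
have r0 : 0 < d0 ^ k by rewrite exprz_gt0 // (lt_trans ltr01).
apply: (le_trans (hK Q _ _ Qin)); rewrite EFinM -muleA.
apply: lee_wpmul2l; first by rewrite lee_fin.
apply: (le_trans (hC _ _ r0)); apply: lee_wpmul2l; first by rewrite lee_fin.
apply: le_measure inQ; rewrite inE; [exact: qball_measurable | exact: mQ DkQ].
Qed.
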